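(* Let $K$ be a finite simplicial complex and $\gamma=[c]\in H_1(K;\mathbb{R})$. If $C\subseteq K^{(1)}$ is an inclusion-minimal homological edge cut for $\gamma$ (i.e. $C$ is a homological edge cut for $\gamma$ but $C\setminus\{e\}$ is not, for every $e\in C$), then there exists a cocycle $\varphi\in C^1(K;\mathbb{R})$ (i.e. $\partial^*\varphi=0$) with $\mathrm{Supp}(\varphi)=C$ and $\varphi(c)=1$.
   Context: For $A\subseteq K$, $K-A$ is the largest subcomplex of $K$ containing no simplex of $A$. $C\subseteq K^{(1)}$ (edges of $K$) is a homological edge cut for $\gamma\in H_1(K;\mathbb{R})$ if $\gamma\notin\mathrm{Im}(H_1(K-C;\mathbb{R})\to H_1(K;\mathbb{R}))$, the map induced by inclusion. $C^1(K;\mathbb{R})=\mathrm{Hom}(C_1(K;\mathbb{R}),\mathbb{R})$ with coboundary $(\partial^*\varphi)(\sigma)=\varphi(\partial\sigma)$ for $2$-simplices $\sigma$ (with a fixed orientation of simplices). $\mathrm{Supp}(\varphi)$ is the set of edges $e$ with $\varphi(e)\ne0$. *)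

From HB Require Import structures.
From mathcomp Require Import all_boot all_order all_algebra.
From mathcomp Require Import reals.
Set Implicit Arguments. Unset Strict Implicit. Unset Printing Implicit Defensive.
Import Order.TTheory GRing.Theory Num.Theory.
Local Open Scope ring_scope.

(* The natural order on
   'I_n fixes the orientation of every simplex (vertices listed increasingly). *)
Definition is_complex (n : nat) (K : {set {set 'I_n}}) : Prop :=
  (forall s, s \in K -> s != set0) /\
  (forall s t : {set 'I_n}, s \in K -> t \subset s -> t != set0 -> t \in K).

Definition edges (n : nat) (K : {set {set 'I_n}}) : {set {set 'I_n}} :=
  [set s in K | #|s| == 2].
Definition triangles (n : nat) (K : {set {set 'I_n}}) : {set {set 'I_n}} :=
  [set s in K | #|s| == 3].

(* K - A : the largest subcomplex of K containing no simplex of A *)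
Definition cdiff (n : nat) (K A : {set {set 'I_n}}) : {set {set 'I_n}} :=
  [set s in K | [forall t in A, ~~ (t \subset s)]].

Section Chains.
Variables (R : realType) (n : nat).

(* real chains/cochains are represented as finite functions on vertex sets *)
Definition chain := {ffun {set 'I_n} -> R}.

Definition is_chain (L : {set {set 'I_n}}) (k : nat) (c : chain) : Prop :=
  forall s, c s != 0 -> (s \in L) && (#|s| == k.+1).

(* incidence number [s : t] for a codimension-1 face t of s: (-1)^i where
   the removed vertex x is the i-th vertex (from 0) of s in increasing order *)
Definition incid (t s : {set 'I_n}) : R :=
  (-1) ^+ (\sum_(x in s :\: t) #|[set y in s | y < x]|)%N.

Definition bnd (c : chain) : chain :=
  [ffun t : {set 'I_n} => \sum_(s : {set 'I_n} | (t \subset s) && (#|s| == #|t|.+1))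
               incid t s * c s].

Definition elem (s : {set 'I_n}) : chain := [ffun t => (t == s)%:R].

Definition pair (phi c : chain) : R := \sum_s phi s * c s.

(* C is a homological edge cut for gamma = [c] in H_1(K;R):
   [c] is not in the image of H_1(K - C;R) -> H_1(K;R), i.e. there is no
   1-cycle z of K - C homologous in K to c. *)
Definition homological_edge_cut (K C : {set {set 'I_n}}) (c : chain) : Prop :=
  ~ exists z : chain, [/\ is_chain (cdiff K C) 1 z, bnd z = 0 &
      exists d : chain, is_chain K 2 d /\ c - z = bnd d].

Definition is_cocycle (K : {set {set 'I_n}}) (phi : chain) : Prop :=
  is_chain K 1 phi /\ forall s, s \in triangles K -> pair phi (bnd (elem s)) = 0.

Definition supp (phi : chain) : {set {set 'I_n}} := [set e | phi e != 0].

End Chains.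

From HB Require Import structures.
From mathcomp Require Import all_boot all_order all_algebra.
From mathcomp Require Import reals.
Set Implicit Arguments. Unset Strict Implicit. Unset Printing Implicit Defensive.
Import Order.TTheory GRing.Theory Num.Theory.
Local Open Scope ring_scope.

(* The cut condition says that [c] is not a
   boundary of a 2-chain plus a chain vanishing on [C] (such a chain is then a cycle of
   [K - C] homologous to [c]); so [c] lies outside the span of the triangle boundaries and
   the elementary chains off [C], and linear algebra yields a cochain [phi] vanishing on that
   span with [phi c = 1], i.e. a cocycle supported in [C].  If [phi] vanished at some
   [e \in C] as well, it would vanish on all cycles of [K - (C :\ e)] and on all boundaries,
   hence on [c] since [C :\ e] is no cut. *)

Lemma separating_col (F : fieldType) m k (W : 'M[F]_(k, m)) (u : 'rV_m) :
  ~~ (u <= W)%MS -> exists f : 'cV_m, W *m f = 0 /\ u *m f = 1.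
Proof.
rewrite submxE => uQ.
have /existsP[j uQj] : [exists j, (u *m cokermx W) 0 j != 0].
  move: uQ; apply: contraNT => /existsPn uQ0.
  by apply/eqP/rowP => j; rewrite [RHS]mxE; exact/eqP/negPn/uQ0.
set a := (u *m cokermx W) 0 j in uQj *.
exists (a^-1 *: col j (cokermx W)); split.
  by rewrite -scalemxAr colE mulmxA mulmx_coker !mul0mx scaler0.
apply/rowP => i; rewrite ord1 -scalemxAr colE mulmxA -colE.
by rewrite [LHS]mxE [X in _ * X]mxE -/a [RHS]mxE mulVf.
Qed.

Section AntisymmetricSum.
Variables (F : numFieldType) (V : lmodType F) (T : finType).

Lemma sum_antisym (A : {set T}) (G : T -> T -> V) :
  {in A &, forall x y, x != y -> G y x = - G x y} ->
  \sum_(x in A) \sum_(y in A :\ x) G x y = 0.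
Proof.
move=> Ganti; set S := LHS.
have SN : S = - S.
  rewrite {1}/S (exchange_big_dep (mem A)) /= => [|x y _ /setD1P[]//].
  rewrite /S -sumrN; apply: eq_bigr => y yA; rewrite -sumrN.
  apply: eq_big => [x|x /andP[xA /setD1P[yx _]]]; last by rewrite Ganti // eq_sym.
  by rewrite !inE yA andbT andbC eq_sym.
have : (2%:R : F) *: S = 0 by rewrite scaler_nat mulr2n {1}SN addNr.
by move/eqP; rewrite scaler_eq0 pnatr_eq0 orFb => /eqP.
Qed.

End AntisymmetricSum.

Section Chains.
Variables (R : realType) (n : nat).
Local Notation chain := (chain R n).
Local Notation elem := (elem R).
Implicit Types (c d z phi : chain) (x y : 'I_n) (s t : {set 'I_n}).
Implicit Types (K L A C : {set {set 'I_n}}).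

(* [R] is not an [R]-module but [R^o] is: the copy makes [*:] available on chains. *)
HB.instance Definition _ := GRing.Lmodule.copy chain {ffun {set 'I_n} -> R^o}.

Lemma chain_sum_elem c : \sum_s c s *: elem s = c.
Proof.
apply/ffunP => t; rewrite sum_ffunE (bigD1 t) //= big1 => [|s /negbTE st].
  by rewrite !ffunE eqxx addr0; exact: mulr1.
by rewrite !ffunE eq_sym st; exact: mulr0.
Qed.

Lemma pair_elem phi s : pair phi (elem s) = phi s.
Proof.
rewrite /pair (bigD1 s) //= big1 => [|t /negbTE ts]; first by rewrite ffunE eqxx mulr1 addr0.
by rewrite ffunE ts mulr0.
Qed.

Lemma pair_is_linear phi : linear (pair phi : chain -> R^o).
Proof.
move=> a c d; rewrite /pair scaler_sumr -big_split; apply: eq_bigr => s _.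
by rewrite !ffunE mulrDr mulrCA.
Qed.

HB.instance Definition _ phi :=
  GRing.isLinear.Build R chain R^o _ (pair phi) (pair_is_linear phi).

Lemma bnd_is_linear : linear (@bnd R n).
Proof.
move=> a c d; apply/ffunP => t; rewrite !ffunE scaler_sumr -big_split.
by apply: eq_bigr => s _; rewrite !ffunE mulrDr mulrCA.
Qed.

HB.instance Definition _ := GRing.isLinear.Build R chain chain _ (@bnd R n) bnd_is_linear.

Definition facet t s := (t \subset s) && (#|s| == #|t|.+1).

Lemma facetP t s : reflect (exists2 x, x \in s & t = s :\ x) (facet t s).
Proof.
apply: (iffP andP) => [[ts /eqP cs]|[x xs ->]]; last first.
  by rewrite subD1set (cardsD1 x s) xs.
have /cards1P[x sDt] : #|s :\: t| == 1%N.
  by rewrite cardsD (setIidPr ts) cs subSnn.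
have xs : x \in s by have := set11 x; rewrite -sDt => /setDP[].
exists x => //; apply/setP => y; rewrite !inE.
move/setP: sDt => /(_ y); rewrite !inE.
case: (boolP (y \in t)) => [yt|_] /=; first by rewrite (subsetP ts) // => <-.
by move=> <-; rewrite andNb.
Qed.

Lemma bnd_neq0 d t : bnd d t != 0 -> exists2 s, d s != 0 & facet t s.
Proof.
rewrite ffunE => bd; have /existsP[s /andP[ds ts]] : [exists s, (d s != 0) && facet t s].
  move: bd; apply: contraNT => /existsPn dt; apply/eqP/big1 => s ts.
  by have := dt s; rewrite /facet ts andbT negbK => /eqP->; rewrite mulr0.
by exists s.
Qed.

Definition pos_in s (x : 'I_n) : nat := #|[set y in s | (y < x)%N]|.

Lemma pos_in_setD1 s x y : x \in s -> pos_in s y = ((x < y)%N + pos_in (s :\ x) y)%N.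
Proof.
move=> xs; rewrite /pos_in (cardsD1 x) !inE xs; congr (_ + _)%N.
by apply: eq_card => z; rewrite !inE andbA.
Qed.

Lemma incid_setD1 s x : x \in s -> incid R (s :\ x) s = (-1) ^+ pos_in s x.
Proof.
move=> xs; rewrite /incid; have -> : s :\: (s :\ x) = [set x].
  by apply/setP => y; rewrite !inE; case: (y =P x) => [->|] /=; rewrite ?xs ?andNb.
by rewrite big_set1.
Qed.

Lemma bnd_elem s : bnd (elem s) = \sum_(x in s) (-1) ^+ pos_in s x *: elem (s :\ x).
Proof.
apply/ffunP => t; rewrite sum_ffunE ffunE big_mkcond (bigD1 s) //= big1 => [|u /negbTE us].
  rewrite ffunE eqxx mulr1 addr0 -/(facet t s).
  have [/facetP[x xs ->]|nts] := boolP (facet t s).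
    rewrite (bigD1 x) //= big1 => [|y /andP[ys yx]].
      by rewrite incid_setD1 // !ffunE eqxx addr0; exact/esym/mulr1.
    rewrite !ffunE; have -> : (s :\ x == s :\ y) = false.
      apply: contraNF yx => /eqP/setP/(_ x).
      by rewrite !inE eqxx xs /= andbT eq_sym => /esym/negbFE.
    exact: mulr0.
  rewrite big1 // => x xs; rewrite !ffunE; have -> : (t == s :\ x) = false.
    by apply: contraNF nts => /eqP->; apply/facetP; exists x.
  exact: mulr0.
by rewrite ffunE us mulr0 if_same.
Qed.

Lemma sign_setD1_swap s x y : x \in s -> y \in s -> x != y ->
  (-1) ^+ (pos_in s y + pos_in (s :\ y) x)
  = - (-1) ^+ (pos_in s x + pos_in (s :\ x) y) :> R.
Proof.
move=> xs ys xy; rewrite (pos_in_setD1 y xs) (pos_in_setD1 x ys) !exprD.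
case: ltngtP xy => [_|_|/val_inj->]; rewrite ?eqxx //= expr0 expr1 mul1r mulN1r => _.
  by rewrite mulNr mulrC.
by rewrite mulNr opprK mulrC.
Qed.

Lemma bnd_bnd_elem s : bnd (bnd (elem s)) = 0.
Proof.
rewrite bnd_elem linear_sum /=.
under eq_bigr => x xs do rewrite linearZ /= bnd_elem scaler_sumr.
under eq_bigr do under eq_bigr do rewrite scalerA -exprD.
apply: sum_antisym => x y xs ys xy.
by rewrite setDDl setUC -setDDl sign_setD1_swap // scaleNr.
Qed.

Lemma bnd_bnd d : bnd (bnd d) = 0.
Proof.
rewrite -[d]chain_sum_elem !linear_sum big1 // => s _.
by rewrite !linearZ /= bnd_bnd_elem scaler0.
Qed.

Lemma is_chainB L k c d : is_chain L k c -> is_chain L k d -> is_chain L k (c - d).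
Proof.
move=> cL dL s; rewrite !ffunE; case: (eqVneq (c s) 0) => [->|/cL//].
by rewrite sub0r oppr_eq0; exact: dL.
Qed.

Lemma is_chain_bnd K k d : is_complex K -> is_chain K k.+1 d -> is_chain K k (bnd d).
Proof.
move=> [_ Kcl] dK t /bnd_neq0[s /dK/andP[sK /eqP cs] /andP[ts /eqP cst]].
have ct : #|t| = k.+1 by apply: succn_inj; rewrite -cst.
by rewrite ct eqxx andbT; apply: Kcl sK ts _; rewrite -card_gt0 ct.
Qed.

Lemma is_chain_cdiff K A k z :
  {in A, forall t, #|t| = k.+1} -> is_chain K k z -> {in A, forall t, z t = 0} ->
  is_chain (cdiff K A) k z.
Proof.
move=> Ak zK zA s zs; have /andP[sK sk] := zK s zs.
rewrite sk andbT inE sK; apply/forall_inP => t tA; apply: contraNN zs => ts.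
have st : t = s by apply/eqP; rewrite eqEcard ts (Ak t tA) (eqP sk) ltnSn.
by rewrite -st zA.
Qed.

Lemma cdiff_chain_notin K A k z s : is_chain (cdiff K A) k z -> z s != 0 -> s \notin A.
Proof.
move=> zK /zK/andP[]; rewrite inE => /andP[_ /forall_inP sA] _.
by apply/negP => /sA; rewrite subxx.
Qed.

Lemma pair_bnd_cocycle K phi d :
  (forall t, t \in triangles K -> pair phi (bnd (elem t)) = 0) -> is_chain K 2 d ->
  pair phi (bnd d) = 0.
Proof.
move=> phiK dK; rewrite -[d]chain_sum_elem !linear_sum big1 // => s _.
rewrite !linearZ /=; case: (eqVneq (d s) 0) => [->|/dK sK]; first by rewrite scale0r.
by rewrite phiK ?inE // scaler0.
Qed.

Lemma pair_eq0_of_not_cut K A phi c :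
  (forall s, s \notin A -> phi s = 0) ->
  (forall t, t \in triangles K -> pair phi (bnd (elem t)) = 0) ->
  ~ homological_edge_cut K A c -> pair phi c = 0.
Proof.
move=> phiA phiK notcut; case: (eqVneq (pair phi c) 0) => // nz; exfalso.
apply: notcut => -[z [zK _ [d [dK czd]]]]; move: nz.
have pz : pair phi z = 0.
  apply: big1 => s _; case: (eqVneq (z s) 0) => [->|/(cdiff_chain_notin zK)/phiA->].
    exact: mulr0.
  exact: mul0r.
by rewrite -(subrK z c) czd linearD /= (pair_bnd_cocycle phiK dK) pz addr0 eqxx.
Qed.

Definition cut_family K C (i : {set 'I_n} + {set 'I_n}) : chain :=
  match i with
  | inl t => if t \in triangles K then bnd (elem t) else 0
  | inr e => if e \in C then 0 else elem e
  end.

Lemma sum_cut_family K C (a : {set 'I_n} + {set 'I_n} -> R) :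
  exists d z, [/\ is_chain K 2 d, {in C, forall e, z e = 0} &
    \sum_i a i *: cut_family K C i = bnd d + z].
Proof.
pose d : chain := [ffun t => if t \in triangles K then a (inl t) else 0].
pose z : chain := [ffun e => if e \in C then 0 else a (inr e)].
exists d, z; split=> [t|e eC|]; rewrite ?ffunE.
- by case: ifP => [|_]; rewrite ?eqxx // inE.
- by rewrite eC.
rewrite big_sumType; congr (_ + _).
  rewrite -[d]chain_sum_elem linear_sum; apply: eq_bigr => t _; rewrite ffunE /=.
  by case: ifP => _; [rewrite linearZ | rewrite scaler0 scale0r linear0].
rewrite -[z]chain_sum_elem; apply: eq_bigr => e _; rewrite ffunE /=.
by case: ifP => _; rewrite ?scaler0 ?scale0r.
Qed.

Lemma edge_cut_notin_span K C c :
  is_complex K -> is_chain K 1 c -> bnd c = 0 -> C \subset edges K ->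
  homological_edge_cut K C c -> ~ exists a, c = \sum_i a i *: cut_family K C i.
Proof.
move=> Kc cK bc CE cut [a ca]; apply: cut.
have [d [z [dK zC sum_dz]]] := sum_cut_family K C a.
have zE : z = c - bnd d by rewrite ca sum_dz addrC addKr.
exists z; split; last by exists d; rewrite zE subKr.
- apply: is_chain_cdiff zC; first by move=> e /(subsetP CE); rewrite inE => /andP[_ /eqP].
  by rewrite zE; apply: is_chainB cK (is_chain_bnd Kc dK).
- by rewrite zE linearB /= bc bnd_bnd subrr.
Qed.

Definition row_of c : 'rV[R]_#|{: {set 'I_n}}| := \row_j c (enum_val j).

Lemma separating_cochain (I : finType) (g : I -> chain) c :
  ~ (exists a : I -> R, c = \sum_i a i *: g i) ->
  exists phi, (forall i, pair phi (g i) = 0) /\ pair phi c = 1.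
Proof.
move=> nspan; pose W := \matrix_(i < #|I|) row_of (g (enum_val i)).
have /separating_col[f [Wf cf]] : ~~ (row_of c <= W)%MS.
  apply/negP => /submxP[D cD]; apply: nspan; exists (fun i => D 0 (enum_rank i)).
  apply/ffunP => s; rewrite sum_ffunE.
  have := congr1 (fun v : 'rV_ _ => v 0 (enum_rank s)) cD; rewrite /= !mxE enum_rankK => ->.
  rewrite (reindex enum_rank) /=; last exact: onW_bij (enum_rank_bij _).
  by apply: eq_bigr => i _; rewrite !mxE !enum_rankK ffunE.
pose phi : chain := [ffun s => f (enum_rank s) 0].
have pairE d : pair phi d = (row_of d *m f) 0 0.
  rewrite /pair mxE (reindex enum_rank) /=; last exact: onW_bij (enum_rank_bij _).
  by apply: eq_bigr => s _; rewrite !mxE !ffunE enum_rankK mulrC.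
exists phi; split=> [i|]; last by rewrite pairE cf mxE.
have giW : row_of (g i) = row (enum_rank i) W by rewrite rowK enum_rankK.
by rewrite pairE giW -row_mul Wf row0 mxE.
Qed.

End Chains.

Theorem mainTheorem12 (R : realType) (n : nat) (K : {set {set 'I_n}})
  (c : chain R n) (C : {set {set 'I_n}}) :
  is_complex K ->
  is_chain K 1 c -> bnd c = 0 ->
  C \subset edges K ->
  homological_edge_cut K C c ->
  (forall e, e \in C -> ~ homological_edge_cut K (C :\ e) c) ->
  exists phi : chain R n,
    [/\ is_cocycle K phi, supp phi = C & pair phi c = 1].
Proof.
move=> Kc cK bc CE cut mincut.
have [phi [phi_family phic]] := separating_cochain (edge_cut_notin_span Kc cK bc CE cut).
have phi_off s : s \notin C -> phi s = 0.
  by move=> sC; have := phi_family (inr s); rewrite /= (negbTE sC) pair_elem.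
have phi_tri t : t \in triangles K -> pair phi (bnd (elem R t)) = 0.
  by move=> tK; have := phi_family (inl t); rewrite /= tK.
exists phi; split=> //.
  split=> // s; case: (boolP (s \in C)) => [/(subsetP CE)|/phi_off->]; first by rewrite inE.
  by rewrite eqxx.
apply/setP => e; rewrite inE; case: (boolP (e \in C)) => [eC|/phi_off->]; last by rewrite eqxx.
apply/eqP => phie; have := oner_neq0 R.
rewrite -phic (pair_eq0_of_not_cut _ phi_tri (mincut e eC)) ?eqxx // => s.
by rewrite !inE negb_and negbK => /orP[/eqP->|/phi_off].
Qed.
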